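(* Let $\mathcal{A}$ be a complex unital Banach algebra, let $p,q\in\mathcal{A}$ be idempotents, let $m\in\mathbb{N}$, and let $\gamma_1,\lambda_1,\dots,\lambda_m\in\mathbb{C}$ with $\lambda_1\gamma_1\neq0$. Then $$\lambda_1p+\gamma_1q-\lambda_1pq+\lambda_2\big(pqp-(pq)^2\big)+\cdots+\lambda_m\big((pq)^{m-1}p-(pq)^m\big)$$ is Drazin invertible (respectively, g-Drazin invertible) if and only if $$\lambda_1-\lambda_1pq+\lambda_2\big(pqp-(pq)^2\big)+\cdots+\lambda_m\big((pq)^{m-1}p-(pq)^m\big)$$ is Drazin invertible (respectively, g-Drazin invertible).
   Context: $\mathcal{A}$ is a complex unital Banach algebra with unit $1$; an idempotent is an element $e$ with $e^2=e$. An element $a$ is Drazin invertible if there exists $b\in\mathcal{A}$ with $ab=ba$, $bab=b$, and $(a(1-ab))^n=0$ for some $n\in\mathbb{N}$; g-Drazin invertible if there exists $b$ with $ab=ba$, $bab=b$, and $a(1-ab)$ quasinilpotent (spectral radius $0$). The terms $\lambda_k\big((pq)^{k-1}p-(pq)^k\big)$ for $k=2,\dots,m$ appear in the sums (for $m=1$ only the $\lambda_1$ terms appear). *)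

From HB Require Import structures.
From mathcomp Require Import all_boot all_order all_algebra.
From mathcomp Require Import all_classical all_reals all_analysis.
From mathcomp Require Import complex.

Set Implicit Arguments.
Unset Strict Implicit.
Unset Printing Implicit Defensive.

Import Order.TTheory GRing.Theory Num.Theory.
Local Open Scope ring_scope.
Local Open Scope classical_set_scope.

Record banach_norm (R : realType) (A : algType R[i]) := BanachNorm {
  bnorm :> A -> R ;
  bnorm_ge0 : forall x, 0 <= bnorm x ;
  bnorm_eq0 : forall x, bnorm x = 0 -> x = 0 ;
  bnormD : forall x y, bnorm (x + y) <= bnorm x + bnorm y ;
  bnormZ : forall (c : R[i]) x, bnorm (c *: x) = ComplexField.Normc.normc c * bnorm x ;
  bnormM : forall x y, bnorm (x * y) <= bnorm x * bnorm y ;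
  bnorm1 : bnorm 1 = 1 ;
  bnorm_complete : forall u : nat -> A,
    (forall e : R, 0 < e -> exists N : nat, forall i j : nat,
        (N <= i)%N -> (N <= j)%N -> bnorm (u i - u j) < e) ->
    exists l : A, forall e : R, 0 < e -> exists N : nat, forall i : nat,
        (N <= i)%N -> bnorm (u i - l) < e
}.

Section Defs.
Context {R : realType} {A : algType R[i]}.

Definition is_idempotent (e : A) : Prop := e * e = e.

Definition invertible (a : A) : Prop := exists b : A, a * b = 1 /\ b * a = 1.

Definition spectrum (a : A) : set R[i] := [set l | ~ invertible (l%:A - a)].

Definition spectral_radius (a : A) : R := sup [set ComplexField.Normc.normc l | l in spectrum a].

Definition quasinilpotent (a : A) : Prop := spectral_radius a = 0.

Definition drazin_invertible (a : A) : Prop :=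
  exists b : A, [/\ a * b = b * a, b * a * b = b &
                    exists n : nat, (a * (1 - a * b)) ^+ n = 0].

Definition gdrazin_invertible (a : A) : Prop :=
  exists b : A, [/\ a * b = b * a, b * a * b = b &
                    quasinilpotent (a * (1 - a * b))].
End Defs.

From Stdlib Require Ncring Ncring_tac.
From HB Require Import structures.
From mathcomp Require Import all_boot all_order all_algebra.
From mathcomp Require Import all_classical all_reals all_analysis.
From mathcomp Require Import complex.
From mathcomp Require Import lra.
Import Order.TTheory GRing.Theory Num.Theory.
Local Open Scope ring_scope.
Set Implicit Arguments.
Unset Strict Implicit.
Unset Printing Implicit Defensive.

(* Write c := lam1 (p - pq) + S, so that pc = c and cq = 0; then
   x = c + gam1 q and y = c + lam1 (1 - p).  Both Drazin and g-Drazin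
   invertibility are instances of "P-Drazin invertibility" (b commutes with a,
   bab = b and a(1 - ab) satisfies P), for P = nilpotent resp. quasinilpotent.
   For an idempotent q with cq = 0, the element t = c + q satisfies tq = q, so
   it is upper triangular with respect to q with corner (1 - q)t = (1 - q)c;
   P-Drazin invertibility passes to and from that corner (explicit block
   formula, with the Neumann-type inverse of 1 - D(1 - Dd) supplied by P), and
   Cline's formula moves (1 - q)c to c(1 - q) = c.  The same argument in the
   opposite ring handles c + (1 - p).  The spectral radius enters only through
   "l - u invertible for all l <> 0", for which one needs the Neumann series. *)

#[global] Instance ring_ops (T : pzRingType) :
  @Ncring.Ring_ops T 0 1 +%R *%R (fun x y => x - y) -%R eq := {}.
#[global] Instance ring_ncring (T : pzRingType) :
  @Ncring.Ring T 0 1 +%R *%R (fun x y => x - y) -%R eq (ring_ops T).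
Proof.
constructor; try by move=> x y -> z w ->.
- exact: RelationClasses.eq_equivalence.
- by move=> x y ->.
- exact: add0r.
- exact: addrC.
- exact: addrA.
- exact: mul1r.
- exact: mulr1.
- exact: mulrA.
- exact: mulrDl.
- by move=> x y z; exact: (mulrDr z x y).
- by [].
- exact: subrr.
Qed.

Ltac ncring := Ncring_tac.non_commutative_ring.
Ltac zsimp := rewrite ?(subrr, mulr0, mul0r, addr0, add0r, subr0, sub0r, oppr0).

Section RingLemmas.
Variable T : pzRingType.
Implicit Types a b c d r s t u v x y z : T.

Definition has_inverse a := exists b, a * b = 1 /\ b * a = 1.
Definition central z := forall a, z * a = a * z.
Definition nilpotent r := exists n, r ^+ n = 0.

Definition drazin_wrt (P : T -> Prop) a :=
  exists b, [/\ a * b = b * a, b * a * b = b & P (a * (1 - a * b))].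

Lemma has_inverseM a b : has_inverse a -> has_inverse b -> has_inverse (a * b).
Proof.
move=> [a' [ha1 ha2]] [b' [hb1 hb2]]; exists (b' * a'); split.
- by rewrite -mulrA (mulrA b) hb1 mul1r ha1.
- by rewrite -mulrA (mulrA a') ha2 mul1r hb2.
Qed.

Lemma has_inverse_mulKr z x : has_inverse z -> has_inverse (z * x) -> has_inverse x.
Proof.
move=> [zi [hz1 hz2]] [v [hv1 hv2]].
have xv : x * v = zi by rewrite -(mul1r (x * v)) -hz2 -mulrA (mulrA z) hv1 mulr1.
by exists (v * z); split; [rewrite mulrA xv hz2 | rewrite -mulrA hv2].
Qed.

Lemma central_inverse z zi : central z -> z * zi = 1 -> zi * z = 1 -> central zi.
Proof.
move=> zc h1 h2 a.
by rewrite -[zi * a]mulr1 -h1 mulrA -(mulrA zi a z) -zc mulrA h2 mul1r.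
Qed.

Lemma commr_inverse x u v : u * v = 1 -> v * u = 1 -> x * u = u * x -> x * v = v * x.
Proof.
move=> h1 h2 c; apply: subr0_eq.
have -> : x * v - v * x =
    v * x * (u * v - 1) - (v * u - 1) * x * v + v * (u * x - x * u) * v by ncring.
by rewrite h1 h2 c; zsimp.
Qed.

Lemma has_inverse_1subC a b : has_inverse (1 - a * b) -> has_inverse (1 - b * a).
Proof.
move=> [w [h1 h2]]; exists (1 + b * w * a); split.
- have -> : (1 - b * a) * (1 + b * w * a) = 1 + b * ((1 - a * b) * w - 1) * a by ncring.
  by rewrite h1; zsimp.
- have -> : (1 + b * w * a) * (1 - b * a) = 1 + b * (w * (1 - a * b) - 1) * a by ncring.
  by rewrite h2; zsimp.
Qed.

Lemma has_inverse_subC z s t : central z -> has_inverse z ->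
  has_inverse (z - s * t) -> has_inverse (z - t * s).
Proof.
move=> zc zu; have [zi [h1 h2]] := zu; have zic := central_inverse zc h1 h2.
have e1 : z - s * t = z * (1 - (zi * s) * t) by rewrite mulrBr mulr1 !mulrA h1 mul1r.
have e2 : z - t * s = z * (1 - t * (zi * s)).
  by rewrite mulrBr mulr1 (mulrA t) -zic !mulrA h1 mul1r.
rewrite e1 e2 => /(has_inverse_mulKr zu) /has_inverse_1subC.
exact: has_inverseM.
Qed.

Lemma has_inverse_1sub_nilpotent u : nilpotent u -> has_inverse (1 - u).
Proof.
move=> [n un0]; exists (\sum_(i < n) u ^+ i).
have uS : GRing.comm u (\sum_(i < n) u ^+ i).
  by apply: commr_sum => i _; apply/commrX/commr_refl.
have Sinv : (1 - u) * \sum_(i < n) u ^+ i = 1.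
  by have := subrX1 u n; rewrite un0 sub0r => h; rewrite -opprB mulNr -h opprK.
by split=> //; rewrite mulrBr mulr1 -uS -{1}(mul1r (\sum_(i < n) _)) -mulrBl.
Qed.

Lemma exprMC s t n : (s * t) ^+ n.+1 = s * (t * s) ^+ n * t.
Proof.
elim: n => [|n IH]; first by rewrite expr1 expr0 mulr1.
by rewrite exprSr IH exprSr !mulrA.
Qed.

Lemma nilpotentMC s t : nilpotent (t * s) -> nilpotent (s * t).
Proof. by move=> [n hn]; exists n.+1; rewrite exprMC hn mulr0 mul0r. Qed.

(* Cline's formula: b c^2 a is a P-Drazin inverse of ba when c is one of ab. *)
Lemma drazin_wrtMC (P : T -> Prop) (PMC : forall s t, P (t * s) -> P (s * t)) a b :
  drazin_wrt P (a * b) -> drazin_wrt P (b * a).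
Proof.
move=> [c [wc cwc Pw]].
have wcc : a * b * c * c = c * c * (a * b).
  by rewrite wc -mulrA wc mulrA.
have wwcc : a * b * (a * b) * c * c = a * b * c.
  apply: subr0_eq.
  have -> : a * b * (a * b) * c * c - a * b * c =
    a * b * (a * b * c - c * (a * b)) * c + a * b * (c * (a * b) * c - c) by ncring.
  by rewrite wc cwc; zsimp.
have ccwwcc : c * c * (a * b) * (a * b) * c * c = c * c.
  apply: subr0_eq.
  have -> : c * c * (a * b) * (a * b) * c * c - c * c =
    c * (c * (a * b) - a * b * c) * (a * b) * c * c
    + (c * (a * b) * c - c) * (a * b) * c * c + (c * (a * b) * c - c) * c by ncring.
  by rewrite wc cwc; zsimp.
exists (b * c * c * a); split.
- apply: subr0_eq.
  have -> : b * a * (b * c * c * a) - b * c * c * a * (b * a) =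
    b * (a * b * c * c - c * c * (a * b)) * a by ncring.
  by rewrite wcc; zsimp.
- apply: subr0_eq.
  have -> : b * c * c * a * (b * a) * (b * c * c * a) - b * c * c * a =
    b * (c * c * (a * b) * (a * b) * c * c - c * c) * a by ncring.
  by rewrite ccwwcc; zsimp.
- have -> : b * a * (1 - b * a * (b * c * c * a)) =
    b * ((1 - a * b * c) * a) + b * (a * b * c - a * b * (a * b) * c * c) * a by ncring.
  rewrite wwcc subrr mulr0 mul0r addr0; apply: PMC.
  have -> : (1 - a * b * c) * a * b = a * b * (1 - a * b * c).
    by rewrite -mulrA mulrBl mulrBr mul1r mulr1 -(mulrA (a * b)) -wc mulrA.
  exact: Pw.
Qed.

Lemma drazin_wrt_central_scale (P : T -> Prop) z zi :
  central z -> z * zi = 1 -> zi * z = 1 -> (forall r, P r -> P (z * r)) ->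
  forall a, drazin_wrt P a -> drazin_wrt P (z * a).
Proof.
move=> zc h1 h2 Pz a [b [ab bab Pr]].
have zic := central_inverse zc h1 h2.
have e1 : z * a * (zi * b) = a * b by rewrite -mulrA (mulrA a) -zic -!mulrA (mulrA z) h1 mul1r.
have e2 : zi * b * (z * a) = b * a by rewrite -mulrA (mulrA b) -zc -!mulrA (mulrA zi) h2 mul1r.
exists (zi * b); split; first by rewrite e1 e2.
- by rewrite e2 mulrA -zic -mulrA bab.
- by rewrite e1 -mulrA; apply: Pz.
Qed.

Section PeirceCorner.
Variables e Y N : T.
Hypotheses (ee : e * e = e) (Ydef : Y = e * Y * (1 - e)) (Ndef : N = (1 - e) * N * (1 - e)).

Let fe : (1 - e) * e = 0. Proof. by rewrite mulrBl mul1r ee subrr. Qed.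
Let ff : (1 - e) * (1 - e) = 1 - e. Proof. by rewrite mulrBr mulr1 fe subr0. Qed.
Let eY : e * Y = Y. Proof. by rewrite Ydef !mulrA ee. Qed.
Let Ye : Y * e = 0. Proof. by rewrite Ydef -mulrA fe mulr0. Qed.
Let fY : (1 - e) * Y = 0. Proof. by rewrite Ydef !mulrA fe !mul0r. Qed.
Let Ne : N * e = 0. Proof. by rewrite Ndef -(mulrA _ (1 - e) e) fe mulr0. Qed.
Let fN : (1 - e) * N = N. Proof. by rewrite {1}Ndef !mulrA ff -Ndef. Qed.
Let NY : N * Y = 0. Proof. by rewrite -eY mulrA Ne mul0r. Qed.
Let YY : Y * Y = 0. Proof. by rewrite -{2}eY mulrA Ye mul0r. Qed.

Let YNY k : Y * N ^+ k * Y = 0.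
Proof.
case: k => [|k]; first by rewrite expr0 mulr1 YY.
by rewrite exprSr -!mulrA NY !mulr0.
Qed.

Lemma expr_corner_add k : (Y + N) ^+ k.+1 = N ^+ k.+1 + Y * N ^+ k.
Proof.
elim: k => [|k IH]; first by rewrite expr1 expr0 mulr1 addrC.
rewrite exprSr IH !mulrDl !mulrDr YNY exprSr -mulrA NY mulr0 !add0r.
by rewrite -(mulrA Y) -!exprSr.
Qed.

Lemma nilpotent_corner_add : nilpotent (Y + N) <-> nilpotent N.
Proof.
split=> [[[|n] hn]|[n hn]].
- by exists 0%N; rewrite expr0 -(expr0 (Y + N)) hn.
- exists n.+1; have : (1 - e) * (Y + N) ^+ n.+1 = 0 by rewrite hn mulr0.
  by rewrite expr_corner_add mulrDr mulrA fY mul0r addr0 exprS mulrA fN -exprS.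
- by exists n.+1; rewrite expr_corner_add hn mulr0 exprS hn mulr0 addr0.
Qed.

(* u agrees with z^-1 on e, and Y e = 0. *)
Let sqr_mul_corner z zi u M : central z -> z * zi = 1 -> zi * z = 1 ->
  u * (z - M) = 1 -> M * e = 0 -> (u * Y) ^+ 2 = 0.
Proof.
move=> zc h1 h2 hu hM; have zic := central_inverse zc h1 h2.
have ue : u * e = zi * e.
  have uze : u * (z * e) = e by rewrite -{2}(mul1r e) -hu -mulrA mulrBl hM subr0.
  have zue : z * (u * e) = e by rewrite mulrA zc -mulrA uze.
  by rewrite -[in RHS]zue mulrA h2 mul1r.
rewrite expr2 -mulrA (mulrA Y u) -{2}eY (mulrA (Y * u)) -(mulrA Y u e) ue.
by rewrite (mulrA Y zi) -zic -(mulrA zi Y e) Ye !(mulr0, mul0r).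
Qed.

Lemma has_inverse_corner_add z : central z -> has_inverse z ->
  has_inverse (z - (Y + N)) <-> has_inverse (z - N).
Proof.
move=> zc [zi [h1 h2]]; split=> [[w [w1 w2]]|[v [v1 v2]]].
- have YNe : (Y + N) * e = 0 by rewrite mulrDl Ye Ne addr0.
  have sq : (- (w * Y)) ^+ 2 = 0 by rewrite sqrrN (sqr_mul_corner zc h1 h2 w2 YNe).
  have -> : z - N = (z - (Y + N)) * (1 - - (w * Y)).
    by rewrite opprK mulrDr mulr1 mulrA w1 mul1r; ncring.
  by apply: has_inverseM; [exists w | apply: has_inverse_1sub_nilpotent; exists 2%N].
- have sq := sqr_mul_corner zc h1 h2 v2 Ne.
  have -> : z - (Y + N) = (z - N) * (1 - v * Y).
    by rewrite mulrBr mulr1 mulrA v1 mul1r; ncring.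
  by apply: has_inverseM; [exists v | apply: has_inverse_1sub_nilpotent; exists 2%N].
Qed.

End PeirceCorner.

Section Triangular.
Variables (P : T -> Prop) (e t : T).
Hypotheses (Pinv : forall r, P r -> has_inverse (1 - r))
  (P_corner_add : forall Y N, Y = e * Y * (1 - e) -> N = (1 - e) * N * (1 - e) ->
     P (Y + N) <-> P N)
  (ee : e * e = e) (te : t * e = e).
Local Notation f := (1 - e).

Let fe : f * e = 0. Proof. by rewrite mulrBl mul1r ee subrr. Qed.
Let ef : e * f = 0. Proof. by rewrite mulrBr mulr1 ee subrr. Qed.
Let ff : f * f = f. Proof. by rewrite mulrBr mulr1 fe subr0. Qed.
Let mulrf x : x * e = 0 -> x * f = x. Proof. by move=> xe; rewrite mulrBr mulr1 xe subr0. Qed.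
Let mulfr x : e * x = 0 -> f * x = x. Proof. by move=> ex; rewrite mulrBl mul1r ex subr0. Qed.

Let P_corner r : r * e = 0 -> P r <-> P (f * r).
Proof.
move=> re; have rf := mulrf re.
have rdec : r = e * r * f + f * r * f by rewrite -!mulrDl subrKC mul1r rf.
rewrite {1}rdec -(mulrA f r f) rf.
apply: P_corner_add; first by rewrite !mulrA ee -(mulrA _ f f) ff.
by rewrite -!mulrA rf (mulrA f) ff.
Qed.

Let residual_e b : b * e = e -> t * (1 - t * b) * e = 0.
Proof. by move=> be; rewrite mulrBr mulr1 mulrBl -!mulrA be !te subrr. Qed.

Let drazin_inverse_fix_e b : t * b = b * t -> b * t * b = b ->
  P (t * (1 - t * b)) -> b * e = e.
Proof.
move=> tb btb /Pinv [w [_ w2]].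
have tbe : t * (b * e) = b * e by rewrite mulrA tb -mulrA te.
pose u := e - b * e.
have tu : t * u = u by rewrite mulrBr te tbe.
have tbb : t * b * b = b by rewrite tb btb.
have tbu : t * b * u = 0 by rewrite mulrBr -(mulrA t b e) tbe mulrA tbb subrr.
have : (1 - t * (1 - t * b)) * u = 0.
  by rewrite mulrBl mul1r -mulrA mulrBl mul1r tbu subr0 tu subrr.
by move=> /(congr1 (GRing.mul w)); rewrite mulrA w2 mul1r mulr0 => /subr0_eq.
Qed.

Lemma drazin_wrt_corner : drazin_wrt P t -> drazin_wrt P (f * t).
Proof.
move=> [b [tb btb PR]]; have be := drazin_inverse_fix_e tb btb PR.
have ftf : f * t * f = f * t by apply: mulrf; rewrite -mulrA te fe.
have fbf : f * b * f = f * b by apply: mulrf; rewrite -mulrA be fe.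
have fbtf : f * b * t * f = f * b * t by apply: mulrf; rewrite -!mulrA te be fe.
have fttf : f * t * t * f = f * t * t by apply: mulrf; rewrite -!mulrA !te fe.
exists (f * b); split.
- by rewrite !mulrA ftf fbf -!mulrA tb.
- by rewrite !mulrA fbf fbtf -!mulrA (mulrA b t b) btb.
- have -> : f * t * (1 - f * t * (f * b)) = f * (t * (1 - t * b)).
    by rewrite !mulrBr !mulr1 !mulrA ftf fttf.
  exact/(P_corner (residual_e be)).
Qed.

(* Conversely, if d is a P-Drazin inverse of the corner D = (1 - e) t, a
   P-Drazin inverse of t = e + B + D (B = e t (1 - e)) is e + X + d with
   X = B pi (1 - N)^-1 - B d, where pi = (1 - e) - D d and N = D pi. *)
Section Lift.
Variables d v : T.
Let D := f * t.
Let B := e * t * f.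
Let N := D * (1 - D * d).
Hypotheses (Dd : D * d = d * D) (dDd : d * D * d = d) (PN : P N)
  (v1 : (1 - N) * v = 1) (v2 : v * (1 - N) = 1).

Let eD : e * D = 0. Proof. by rewrite /D mulrA ef mul0r. Qed.
Let fD : f * D = D. Proof. by rewrite /D mulrA ff. Qed.
Let De : D * e = 0. Proof. by rewrite /D -mulrA te fe. Qed.
Let Df : D * f = D. Proof. exact: mulrf De. Qed.
Let eB : e * B = B. Proof. by rewrite /B !mulrA ee. Qed.
Let Bf : B * f = B. Proof. by rewrite /B -mulrA ff. Qed.
Let Be : B * e = 0. Proof. by rewrite /B -mulrA fe mulr0. Qed.
Let fB : f * B = 0. Proof. by rewrite /B !mulrA fe !mul0r. Qed.
Let BB : B * B = 0. Proof. by rewrite -{1}Bf -mulrA fB mulr0. Qed.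
Let DB : D * B = 0. Proof. by rewrite -{1}eB mulrA De mul0r. Qed.

Let tE : t = e + B + D.
Proof.
apply: subr0_eq; have -> : t - (e + B + D) = e * (t * e - e) + (e * e - e).
  by rewrite /B /D; ncring.
by rewrite te ee; zsimp.
Qed.

Let Ddd : D * d * d = d. Proof. by rewrite Dd dDd. Qed.
Let ddD : d * d * D = d. Proof. by rewrite -mulrA -Dd mulrA dDd. Qed.
Let df : d * f = d. Proof. by rewrite -{1}ddD -mulrA Df ddD. Qed.
Let fd : f * d = d. Proof. by rewrite -{1}Ddd (mulrA f (D * d)) (mulrA f D) fD Ddd. Qed.
Let de : d * e = 0. Proof. by rewrite -{1}df -mulrA fe mulr0. Qed.
Let ed : e * d = 0. Proof. by rewrite -{1}fd mulrA ef mul0r. Qed.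
Let dB : d * B = 0. Proof. by rewrite -{1}df -mulrA fB mulr0. Qed.

Let pi := f - D * d.
Let pie : pi * e = 0. Proof. by rewrite /pi mulrBl fe -mulrA de mulr0 subrr. Qed.
Let Dpi : D * pi = N. Proof. by rewrite /N /pi !mulrBr mulr1 De subr0. Qed.
Let piD : pi * D = N. Proof. by rewrite /N /pi mulrBl fD mulrBr mulr1 -(mulrA D d D) Dd. Qed.
Let pid : pi * d = 0. Proof. by rewrite /pi mulrBl fd Ddd subrr. Qed.
Let dpi : d * pi = 0. Proof. by rewrite /pi mulrBr df (mulrA d D d) dDd subrr. Qed.
Let pipi : pi * pi = pi.
Proof.
rewrite {1}/pi mulrBl -(mulrA D d pi) dpi mulr0 subr0 mulfr //.
by rewrite /pi mulrBr ef (mulrA e D d) eD mul0r subrr.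
Qed.
Let Npi : N * pi = N. Proof. by rewrite -Dpi -mulrA pipi. Qed.
Let piN : pi * N = N. Proof. by rewrite -{1}Dpi mulrA piD Npi. Qed.
Let piv : pi * v = v * pi.
Proof.
by apply: (commr_inverse v1 v2); rewrite [pi * _]mulrBr [_ * pi]mulrBl mulr1 mul1r piN Npi.
Qed.
Let ve : v * e = e.
Proof.
have Ne : N * e = 0 by rewrite -Dpi -(mulrA D pi e) pie mulr0.
have fNe : (1 - N) * e = e by rewrite mulrBl mul1r Ne subr0.
by rewrite -{1}fNe mulrA v2 mul1r.
Qed.

Let K := B * pi * v.
Let X := K - B * d.
Let b := e + X + d.

Let eK : e * K = K. Proof. by rewrite /K (mulrA e (B * pi)) (mulrA e B) eB. Qed.
Let Ke : K * e = 0. Proof. by rewrite /K -(mulrA (B * pi) v e) ve -(mulrA B pi e) pie mulr0. Qed.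
Let fK : f * K = 0. Proof. by rewrite /K (mulrA f (B * pi)) (mulrA f B) fB !mul0r. Qed.
Let KB : K * B = 0. Proof. by rewrite -(mulrf Ke) -(mulrA K f B) fB mulr0. Qed.
Let eX : e * X = X. Proof. by rewrite /X mulrBr eK (mulrA e B d) eB. Qed.
Let Xe : X * e = 0. Proof. by rewrite /X mulrBl Ke -(mulrA B d e) de mulr0 subrr. Qed.
Let fX : f * X = 0. Proof. by rewrite /X mulrBr fK (mulrA f B d) fB mul0r subrr. Qed.
Let XB : X * B = 0. Proof. by rewrite /X mulrBl KB -(mulrA B d B) dB mulr0 subrr. Qed.
Let BX : B * X = 0.
Proof.
by rewrite /X /K mulrBr (mulrA B (B * pi)) (mulrA B B) (mulrA B B d) BB !mul0r subrr.
Qed.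
Let DX : D * X = 0.
Proof.
by rewrite /X /K mulrBr (mulrA D (B * pi)) (mulrA D B) (mulrA D B d) DB !mul0r subrr.
Qed.

Let KDd : K * D * d = 0.
Proof.
have piDd : pi * (D * d) = 0 by rewrite Dd (mulrA pi d D) pid mul0r.
rewrite /K -(mulrA B pi v) piv (mulrA B v pi) -(mulrA (B * v * pi) D d).
by rewrite -(mulrA (B * v) pi (D * d)) piDd mulr0.
Qed.

Let K1D : K * (1 - D) = B * pi.
Proof.
have piv1D : pi * v * (1 - D) = pi.
  rewrite piv -(mulrA v pi (1 - D)) [pi * (1 - D)]mulrBr mulr1 piD -{1}Npi.
  by rewrite -{1}(mul1r pi) -mulrBl (mulrA v (1 - N) pi) v2 mul1r.
rewrite /K -(mulrA (B * pi) v (1 - D)) -(mulrA B pi (v * (1 - D))).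
by rewrite (mulrA pi v (1 - D)) piv1D.
Qed.

Let tbE : t * b = e + X + B * d + D * d.
Proof.
rewrite {1}tE /b; apply: subr0_eq.
have -> : (e + B + D) * (e + X + d) - (e + X + B * d + D * d) =
  (e * e - e) + (e * X - X) + e * d + B * e + B * X + D * e + D * X by ncring.
by rewrite ee eX ed Be BX De DX; zsimp.
Qed.

Let btE : b * t = e + B + X * D + d * D.
Proof.
rewrite tE /b; apply: subr0_eq.
have -> : (e + X + d) * (e + B + D) - (e + B + X * D + d * D) =
  (e * e - e) + (e * B - B) + e * D + X * e + X * B + d * e + d * B by ncring.
by rewrite ee eB eD Xe XB de dB; zsimp.
Qed.

Let be : b * e = e. Proof. by rewrite /b 2!mulrDl ee Xe de; zsimp. Qed.

Let tb_comm : t * b = b * t.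
Proof.
rewrite tbE btE -Dd; apply: subr0_eq.
have -> : e + X + B * d + D * d - (e + B + X * D + D * d) =
  K * (1 - D) - (B - B * (d * D)) by rewrite /X; ncring.
by rewrite K1D -Dd /pi mulrBr Bf mulrA; zsimp.
Qed.

Let btb : b * t * b = b.
Proof.
have XX : X * X = 0 by rewrite -{1}(mulrf Xe) -(mulrA X f X) fX mulr0.
have dX : d * X = 0 by rewrite -{1}df -(mulrA d f X) fX mulr0.
have XDd : X * D * d + B * d = 0.
  have -> : X * D * d + B * d = K * D * d - B * (d * D * d - d) by rewrite /X; ncring.
  by rewrite KDd dDd; zsimp.
rewrite -mulrA tbE /b; apply: subr0_eq.
have -> : (e + X + d) * (e + X + B * d + D * d) - (e + X + d) =
  (e * e - e) + (e * X - X) + (e * B - B) * d + e * D * d + X * e + X * X + X * B * d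
  + (X * D * d + B * d) + d * e + d * X + d * B * d + (d * D * d - d) by ncring.
by rewrite ee eX eB eD Xe XX XB XDd de dX dB dDd; zsimp.
Qed.

Let P_residual : P (t * (1 - t * b)).
Proof.
have ft : f * t = D by [].
have Dt : D * t = D * D by rewrite [in LHS]tE 2!mulrDr De DB; zsimp.
have Db : D * b = D * d by rewrite /b 2!mulrDr De DX; zsimp.
apply/(P_corner (residual_e be)); suff -> : f * (t * (1 - t * b)) = N by [].
apply: subr0_eq; have -> : f * (t * (1 - t * b)) - N =
  (f * t - D) * (1 - t * b) - (D * t - D * D) * b - D * (D * b - D * d) by rewrite /N; ncring.
by rewrite ft Dt Db; zsimp.
Qed.

Lemma drazin_wrt_lift : drazin_wrt P t.
Proof. by exists b; split; [exact: tb_comm | exact: btb | exact: P_residual]. Qed.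

End Lift.

Lemma drazin_wrt_triangular : drazin_wrt P t <-> drazin_wrt P (f * t).
Proof.
split=> [|[d [Dd dDd PN]]]; first exact: drazin_wrt_corner.
have [v [v1 v2]] := Pinv PN; exact: (drazin_wrt_lift Dd dDd PN v1 v2).
Qed.

End Triangular.

Record drazin_pred (P : T -> Prop) : Prop := DrazinPred {
  predMC : forall s t, P (t * s) -> P (s * t);
  pred_inv1 : forall r, P r -> has_inverse (1 - r);
  pred_corner_addr : forall e, e * e = e -> forall Y N, Y = e * Y * (1 - e) ->
    N = (1 - e) * N * (1 - e) -> P (Y + N) <-> P N;
  pred_corner_addl : forall e, e * e = e -> forall Y N, Y = (1 - e) * Y * e ->
    N = (1 - e) * N * (1 - e) -> P (Y + N) <-> P N }.

(* c + q is triangular with respect to q, with corner (1 - q) c, which Cline's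
   formula exchanges with c (1 - q) = c. *)
Lemma drazin_wrt_addr_idem P c q : drazin_pred P -> q * q = q -> c * q = 0 ->
  drazin_wrt P (c + q) <-> drazin_wrt P c.
Proof.
move=> [PMC Pinv Pr _] qq cq.
have tq : (c + q) * q = q by rewrite mulrDl cq qq add0r.
rewrite (drazin_wrt_triangular Pinv (Pr q qq) qq tq).
have -> : (1 - q) * (c + q) = (1 - q) * c.
  by rewrite mulrDr [(1 - q) * q]mulrBl mul1r qq subrr addr0.
have cf : c * (1 - q) = c by rewrite mulrBr mulr1 cq subr0.
split=> [/(drazin_wrtMC PMC)|]; first by rewrite cf.
by rewrite -{1}cf => /(drazin_wrtMC PMC).
Qed.

End RingLemmas.

Section ConverseRing.
Variable T : pzRingType.
Implicit Types (P : T -> Prop) (a c e z Y N : T).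

Lemma has_inverse_rev a : @has_inverse T^c a <-> has_inverse a.
Proof. by split=> [[b [h1 h2]]|[b [h1 h2]]]; exists b. Qed.

Lemma central_rev z : central z -> @central T^c z.
Proof. by move=> zc a; symmetry; apply: zc. Qed.

Lemma nilpotent_rev a : @nilpotent T^c a <-> nilpotent a.
Proof. by split=> [[n hn]|[n hn]]; exists n; rewrite ?revrX // -hn -revrX. Qed.

Lemma drazin_wrt_rev P a : @drazin_wrt T^c P a <-> drazin_wrt P a.
Proof.
have key b : a * b = b * a -> (1 - b * a) * a = a * (1 - a * b).
  by move=> ab; rewrite mulrBl mulrBr mul1r mulr1 [in RHS]ab mulrA [in RHS]ab.
split=> [[b [ab bab Pb]]|[b [ab bab Pb]]]; exists b; split.
- exact: esym ab.
- by rewrite -mulrA.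
- by move: Pb; change (P ((1 - (b : T) * a) * a) -> P (a * (1 - a * (b : T)))); rewrite key.
- exact: esym ab.
- by rewrite /= -mulrA.
- by change (P ((1 - b * a) * a)); rewrite key.
Qed.

Section LowerCorner.
Variables e Y N : T.
Hypotheses (ee : e * e = e) (Ydef : Y = (1 - e) * Y * e) (Ndef : N = (1 - e) * N * (1 - e)).

Let Ydef_rev : Y = (e : T^c) * Y * (1 - e). Proof. by rewrite [RHS]mulrA. Qed.
Let Ndef_rev : N = ((1 - e) : T^c) * N * (1 - e). Proof. by rewrite [RHS]mulrA. Qed.

Lemma nilpotent_corner_addl : nilpotent (Y + N) <-> nilpotent N.
Proof. by rewrite -!nilpotent_rev; exact: (@nilpotent_corner_add T^c e). Qed.

Lemma has_inverse_corner_addl z : central z -> has_inverse z ->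
  has_inverse (z - (Y + N)) <-> has_inverse (z - N).
Proof.
move=> zc /has_inverse_rev zu; rewrite -!has_inverse_rev.
exact: (@has_inverse_corner_add T^c e Y N ee Ydef_rev Ndef_rev z (central_rev zc)).
Qed.

End LowerCorner.

Lemma drazin_pred_rev P : drazin_pred P -> @drazin_pred T^c P.
Proof.
move=> [PMC Pinv Pr Pl]; split.
- by move=> s t; apply: PMC.
- by move=> r /Pinv /has_inverse_rev.
- move=> e ee Y N hY hN; apply: (Pl e ee); rewrite -mulrA; [exact: hY | exact: hN].
- move=> e ee Y N hY hN; apply: (Pr e ee); rewrite -mulrA; [exact: hY | exact: hN].
Qed.

Lemma drazin_wrt_addl_idem P c e : drazin_pred P -> e * e = e -> e * c = 0 ->
  drazin_wrt P (c + e) <-> drazin_wrt P c.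
Proof.
move=> hP ee ec; rewrite -!drazin_wrt_rev.
exact: (@drazin_wrt_addr_idem T^c P c e (drazin_pred_rev hP) ee ec).
Qed.

End ConverseRing.

Lemma nilpotent_drazin_pred (T : pzRingType) : drazin_pred (@nilpotent T).
Proof.
split.
- exact: nilpotentMC.
- exact: has_inverse_1sub_nilpotent.
- by move=> e ee Y N hY hN; exact: (nilpotent_corner_add ee hY hN).
- by move=> e ee Y N hY hN; exact: (nilpotent_corner_addl ee hY hN).
Qed.

Section ComplexAlgebra.
Variables (R : realType) (A : algType R[i]).
Implicit Types (P : A -> Prop) (a c p q r u : A).

Lemma central_alg (k : R[i]) : central (k%:A : A).
Proof. by move=> a; rewrite mulr_algl mulr_algr. Qed.

Lemma has_inverse_alg (k : R[i]) : k != 0 -> has_inverse (k%:A : A).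
Proof.
by move=> k0; exists k^-1%:A; split; rewrite mulr_algl scalerA ?divff ?mulVf // scale1r.
Qed.

Lemma drazin_wrt_scalerl P (PZ : forall k r, k != 0 -> P r -> P (k *: r)) k a :
  k != 0 -> drazin_wrt P (k *: a) <-> drazin_wrt P a.
Proof.
have scale_inv k' : k' != 0 -> forall a', drazin_wrt P a' -> drazin_wrt P (k' *: a').
  move=> k0 a'; rewrite -mulr_algl.
  apply: (@drazin_wrt_central_scale A P _ k'^-1%:A (central_alg k')).
  - by rewrite mulr_algl scalerA divff ?scale1r.
  - by rewrite mulr_algl scalerA mulVf ?scale1r.
  - by move=> r' Pr; rewrite mulr_algl; apply: PZ.
move=> k0; split; last exact: scale_inv.
by move/(scale_inv _ (invr_neq0 k0)); rewrite scalerA mulVf ?scale1r.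
Qed.

Section IdempotentSwap.
Variables (P : A -> Prop) (p q c : A).
Hypotheses (hP : drazin_pred P) (PZ : forall k r, k != 0 -> P r -> P (k *: r))
  (pp : p * p = p) (qq : q * q = q) (pc : p * c = c) (cq : c * q = 0).

Let drazin_wrt_add_scaler k e (idem_add : forall c', c' * q = 0 -> (1 - p) * c' = 0 ->
    drazin_wrt P (c' + e) <-> drazin_wrt P c') :
  k != 0 -> drazin_wrt P (c + k *: e) <-> drazin_wrt P c.
Proof.
move=> k0; have ki0 : k^-1 != 0 by rewrite invr_neq0.
rewrite -(drazin_wrt_scalerl PZ (c + k *: e) ki0) scalerDr scalerA mulVf // scale1r.
rewrite -(drazin_wrt_scalerl PZ c ki0) idem_add //.
- by rewrite -scalerAl cq scaler0.
- by rewrite -scalerAr mulrBl mul1r pc subrr scaler0.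
Qed.

Lemma drazin_wrt_idem_swap (g l : R[i]) : g != 0 -> l != 0 ->
  drazin_wrt P (c + g *: q) <-> drazin_wrt P (c + l *: (1 - p)).
Proof.
move=> g0 l0; rewrite (drazin_wrt_add_scaler _ g0) ?(drazin_wrt_add_scaler _ l0) //.
- move=> c' _ fc'; apply: drazin_wrt_addl_idem => //.
  by rewrite mulrBr mulr1 mulrBl mul1r pp subrr subr0.
- by move=> c' c'q _; exact: drazin_wrt_addr_idem.
Qed.

End IdempotentSwap.

Lemma nilpotentZ k r : k != 0 -> nilpotent r -> nilpotent (k *: r).
Proof. by move=> _ [n rn0]; exists n; rewrite exprZn rn0 scaler0. Qed.

Lemma drazin_invertibleE a : drazin_invertible a <-> drazin_wrt (@nilpotent A) a.
Proof. by []. Qed.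

(* Spectrum contained in {0}: quasinilpotence in a Banach algebra (quasinilpotentP). *)
Definition spectrum_sub0 u := forall l : R[i], l != 0 -> has_inverse (l%:A - u).

Lemma spectrum_sub0Z k r : k != 0 -> spectrum_sub0 r -> spectrum_sub0 (k *: r).
Proof.
move=> k0 hr l l0; have kl0 : k^-1 * l != 0 by rewrite mulf_neq0 ?invr_neq0.
have -> : l%:A - k *: r = k%:A * ((k^-1 * l)%:A - r).
  by rewrite mulrBr mulr_algl scalerA mulVKf // mulr_algl.
exact: has_inverseM (has_inverse_alg k0) (hr _ kl0).
Qed.

Lemma spectrum_sub0_drazin_pred : drazin_pred spectrum_sub0.
Proof.
split.
- by move=> s t H l l0; exact: has_inverse_subC (central_alg l) (has_inverse_alg l0) (H l l0).
- by move=> r H; have := H 1 (oner_neq0 _); rewrite scale1r.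
- move=> e ee Y N hY hN; split=> H l l0;
    by apply/(has_inverse_corner_add ee hY hN (central_alg l) (has_inverse_alg l0)); apply: H.
- move=> e ee Y N hY hN; split=> H l l0;
    by apply/(has_inverse_corner_addl ee hY hN (central_alg l) (has_inverse_alg l0)); apply: H.
Qed.

End ComplexAlgebra.

Arguments spectrum_sub0 {R A}.

Lemma expr_eventually_lt (R : realType) (r d : R) : 0 <= r -> r < 1 -> 0 < d ->
  exists N, forall n, (N <= n)%N -> r ^+ n < d.
Proof.
move=> r0 r1 d0; rewrite -(ger0_norm r0) in r1.
have /cvgr_dist_lt/(_ d d0) [N _ HN] := cvg_expr r1.
exists N => n Nn; have := HN n Nn.
by rewrite /= sub0r normrN ger0_norm // exprn_ge0.
Qed.

Section BanachAlgebra.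
Variables (R : realType) (A : algType R[i]) (nrm : banach_norm A).
Local Notation normc := (@ComplexField.Normc.normc R).
Implicit Types (u v x y : A).

Lemma bnorm0 : nrm 0 = 0.
Proof. by rewrite -(scale0r (0 : A)) bnormZ ComplexField.Normc.normc0 mul0r. Qed.

Lemma bnormN x : nrm (- x) = nrm x.
Proof. by rewrite -scaleN1r bnormZ (normcN (1 : R[i])) ComplexField.Normc.normc1 mul1r. Qed.

Lemma bnorm_sum (I : Type) (s : seq I) (F : I -> A) :
  nrm (\sum_(i <- s) F i) <= \sum_(i <- s) nrm (F i).
Proof.
elim: s => [|i s IH]; first by rewrite !big_nil bnorm0.
by rewrite !big_cons (le_trans (bnormD _ _ _)) // lerD.
Qed.

Lemma bnormX x n : nrm (x ^+ n) <= nrm x ^+ n.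
Proof.
elim: n => [|n IH]; first by rewrite !expr0 bnorm1.
by rewrite !exprS (le_trans (bnormM _ _ _)) // ler_pM ?bnorm_ge0.
Qed.

Lemma bnorm_vanishing x y (s : nat -> A) (a r : R) : 0 <= a -> 0 <= r -> r < 1 ->
  (forall e, 0 < e -> exists N, forall n, (N <= n)%N -> nrm (y - s n) < e) ->
  (forall n, nrm x <= a * nrm (y - s n) + r ^+ n) -> x = 0.
Proof.
move=> a0 r0 r1 sy hx; apply: (@bnorm_eq0 _ _ nrm); apply/eqP.
rewrite eq_le bnorm_ge0 andbT; apply/ler_addgt0Pr => e e0; rewrite add0r.
have e2 : 0 < e / 2 by rewrite divr_gt0.
have a1 : 0 < a + 1 by rewrite ltr_wpDl.
have [N1 HN1] := sy _ (divr_gt0 e2 a1).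
have [N2 HN2] := expr_eventually_lt r0 r1 e2.
have := HN1 _ (leq_maxl N1 N2); rewrite ltr_pdivlMr // => h1.
have h2 := HN2 _ (leq_maxr N1 N2).
move: h1 h2 (hx (maxn N1 N2)) (bnorm_ge0 nrm (y - s (maxn N1 N2))).
set d := nrm (y - _); set rn := r ^+ _; nra.
Qed.

Section Neumann.
Variable v : A.
Hypothesis v_lt1 : nrm v < 1.
Let r := nrm v.
Let s n := \sum_(i < n) v ^+ i.

Let r_ge0 : 0 <= r. Proof. exact: bnorm_ge0. Qed.
Let one_sub_r_gt0 : 0 < 1 - r. Proof. by rewrite subr_gt0. Qed.

Let s_tail m n : (m <= n)%N -> nrm (s n - s m) <= r ^+ m / (1 - r).
Proof.
move=> mn; have -> : s n - s m = \sum_(m <= i < n) v ^+ i.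
  by rewrite /s -!(big_mkord xpredT) (big_cat_nat (leq0n m) mn) /= addrC addrK.
apply: le_trans (bnorm_sum _ _) _; apply: le_trans (_ : \sum_(m <= i < n) r ^+ i <= _).
  by rewrite big_seq_cond [leRHS]big_seq_cond; apply: ler_sum => i _; apply: bnormX.
have geo : \sum_(m <= i < n) r ^+ i * (1 - r) = r ^+ m - r ^+ n.
  have := telescope_sumr (fun k => - r ^+ k) mn; rewrite opprK addrC => <-.
  by apply: eq_bigr => i _; rewrite exprSr opprK mulrBr mulr1 addrC.
by rewrite ler_pdivlMr // mulr_suml geo lerBlDr lerDl exprn_ge0.
Qed.

Let s_cauchy e : 0 < e -> exists N, forall i j, (N <= i)%N -> (N <= j)%N ->
  nrm (s i - s j) < e.
Proof.
move=> e0; have [N HN] := expr_eventually_lt r_ge0 v_lt1 (mulr_gt0 e0 one_sub_r_gt0).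
have tail a b : (N <= b)%N -> (b <= a)%N -> nrm (s a - s b) < e.
  move=> Nb ba; apply: le_lt_trans (s_tail ba) _.
  by rewrite ltr_pdivrMr // (le_lt_trans _ (HN N (leqnn N))) // ler_wiXn2l // ltW.
exists N => i j Ni Nj; have [ji|ij] := leqP j i; first exact: tail.
by rewrite -bnormN opprB; apply: tail => //; apply: ltnW.
Qed.

Let s_telescope n : (1 - v) * s n = 1 - v ^+ n /\ s n * (1 - v) = 1 - v ^+ n.
Proof.
have vs : GRing.comm v (s n) by apply: commr_sum => i _; apply/commrX/commr_refl.
have l : (1 - v) * s n = 1 - v ^+ n by rewrite -opprB mulNr -subrX1 opprB.
by split=> //; rewrite -l mulrBr mulr1 mulrBl mul1r vs.
Qed.

Lemma has_inverse_1sub_bnorm_lt1 : has_inverse (1 - v).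
Proof.
have [L HL] := @bnorm_complete _ _ nrm _ s_cauchy.
have sL e : 0 < e -> exists N, forall n, (N <= n)%N -> nrm (L - s n) < e.
  by move=> e0; have [N HN] := HL e e0; exists N => n Nn; rewrite -bnormN opprB HN.
have a0 := bnorm_ge0 nrm (1 - v).
exists L; split; apply: subr0_eq; apply: (bnorm_vanishing a0 r_ge0 v_lt1 sL) => n;
  have [l rt] := s_telescope n.
- have -> : (1 - v) * L - 1 = (1 - v) * (L - s n) - v ^+ n.
    by rewrite mulrBr l; ncring.
  by rewrite (le_trans (bnormD _ _ _)) // bnormN lerD ?bnormM ?bnormX.
- have -> : L * (1 - v) - 1 = (L - s n) * (1 - v) - v ^+ n.
    by rewrite mulrBl rt; ncring.
  by rewrite (le_trans (bnormD _ _ _)) // bnormN lerD ?bnormX // mulrC bnormM.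
Qed.

End Neumann.

Lemma has_inverse_sub_bnorm_lt u (l : R[i]) : nrm u < normc l -> has_inverse (l%:A - u).
Proof.
move=> ul; have l_gt0 : 0 < normc l := le_lt_trans (bnorm_ge0 nrm u) ul.
have l0 : l != 0 by apply: contraTneq l_gt0 => ->; rewrite ComplexField.Normc.normc0 ltxx.
have -> : l%:A - u = l%:A * (1 - l^-1 *: u).
  by rewrite mulrBr mulr1 mulr_algl scalerA divff // scale1r.
apply: has_inverseM (has_inverse_alg A l0) _; apply: has_inverse_1sub_bnorm_lt1.
by rewrite bnormZ ComplexField.Normc.normcV mulrC ltr_pdivrMr // mul1r.
Qed.

Lemma quasinilpotentP u : quasinilpotent u <-> spectrum_sub0 u.
Proof.
rewrite /quasinilpotent /spectral_radius; set S := (X in sup X); split.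
- move=> r0 l l0; apply: contrapT => ninv.
  have ub : has_ubound S.
    exists (nrm u) => _ [k k_sp <-]; rewrite leNgt; apply/negP => uk.
    exact/k_sp/has_inverse_sub_bnorm_lt.
  have := ub_le_sup ub (ex_intro2 _ _ l ninv erefl); rewrite r0 => l_le0.
  have /ComplexField.Normc.eq0_normc/eqP : normc l = 0.
    by apply/eqP; rewrite eq_le l_le0; case: (l) => a b; exact: sqrtr_ge0.
  by rewrite (negbTE l0).
- move=> hu; have S0 (y : R) : S y -> y = 0.
    move=> [k k_sp <-]; have [->|k0] := eqVneq k 0; first exact: ComplexField.Normc.normc0.
    by case: k_sp; apply: hu.
  have [[y Sy]|noS] := pselect (exists y : R, S y).
  + suff -> : S = [set 0]%classic by exact: sup1.
    by apply/seteqP; split=> z /=; [move/S0 | move=> ->; rewrite -(S0 y Sy)].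
  + suff -> : S = set0 by exact: sup0.
    by apply/seteqP; split=> z // Sz; apply: noS; exists z.
Qed.

Lemma gdrazin_invertibleE (a : A) : gdrazin_invertible a <-> drazin_wrt spectrum_sub0 a.
Proof. by split=> -[b [ab bab /quasinilpotentP Pb]]; exists b. Qed.

End BanachAlgebra.

Lemma pq_term_corner (R : realType) (A : algType R[i]) (p q : A) (k : nat) :
  p * p = p -> q * q = q -> (0 < k)%N ->
  let s := (p * q) ^+ k.-1 * p - (p * q) ^+ k in p * s = s /\ s * q = 0.
Proof.
move=> pp qq k0 s; have sE : s = (p * q) ^+ k.-1 * p * (1 - q).
  by rewrite /s mulrBr mulr1 -mulrA -exprSr prednK.
split; last by rewrite sE -mulrA mulrBl mul1r qq subrr mulr0.
rewrite sE !mulrA; congr (_ * _); case: k.-1 => [|j]; first by rewrite expr0 mulr1 mul1r pp.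
by rewrite exprS !mulrA pp.
Qed.

Theorem proposition3p1 (R : realType) (A : algType R[i]) (nrm : banach_norm A) (p q : A)
  (m : nat) (gam1 : R[i]) (lam : nat -> R[i]) :
  is_idempotent p -> is_idempotent q -> (1 <= m)%N -> lam 1%N * gam1 != 0 ->
  let S := \sum_(2 <= k < m.+1) lam k *: ((p * q) ^+ k.-1 * p - (p * q) ^+ k) in
  let x := lam 1%N *: p + gam1 *: q - lam 1%N *: (p * q) + S in
  let y := (lam 1%N)%:A - lam 1%N *: (p * q) + S in
  (drazin_invertible x <-> drazin_invertible y) /\
  (gdrazin_invertible x <-> gdrazin_invertible y).
Proof.
move=> pp qq m1 /[!mulf_eq0] /norP[l0 g0] S x y; rewrite /is_idempotent in pp qq.
pose c := \sum_(1 <= k < m.+1) lam k *: ((p * q) ^+ k.-1 * p - (p * q) ^+ k).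
have [pc cq] : p * c = c /\ c * q = 0.
  rewrite /c mulr_sumr mulr_suml; split; [apply: eq_big_nat | apply: big1_seq] => k.
  - by move=> /andP[k1 _]; rewrite -scalerAr (pq_term_corner pp qq k1).1.
  - rewrite mem_index_iota => /andP[_ /andP[k1 _]].
    by rewrite -scalerAl (pq_term_corner pp qq k1).2 scaler0.
have cE : c = lam 1%N *: (p - p * q) + S by rewrite /c big_ltn // expr0 mul1r expr1.
have xE : x = c + gam1 *: q by rewrite cE /x scalerBr; ncring.
have yE : y = c + lam 1%N *: (1 - p) by rewrite cE /y !scalerBr; ncring.
rewrite xE yE !drazin_invertibleE !(gdrazin_invertibleE nrm); split.
- by apply: (drazin_wrt_idem_swap (nilpotent_drazin_pred A) (@nilpotentZ R A)).
- by apply: (drazin_wrt_idem_swap (spectrum_sub0_drazin_pred A) (@spectrum_sub0Z R A)).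
Qed.
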